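(* Let $\psi$ be an injective map from the positive integers to the positive integers and let $A=\{\psi(n): n\ge 1\}$. Let $\alpha$ be a positive even integer. For every nonnegative integer $n$, \[ \bar{p}^{A}(n)=\sum_{(N_0,N_1,N_2,\dots)}\ \prod_{j\ge0}\bar{p}^{A}_{\alpha}(N_j), \] where the sum runs over all sequences $(N_0,N_1,\dots)$ of nonnegative integers with $n=\sum_{i\ge0}(\alpha+1)^{i}N_i$.
   Context: For a set $A$ of positive integers: $\bar{p}^{A}(n)=E^{A}(n)-O^{A}(n)$, where $E^{A}(n)$ (resp. $O^{A}(n)$) is the number of partitions of $n$ into parts from $A$ (no restriction on multiplicities) with an even (resp. odd) number of parts, and $\bar{p}^{A}(0)=1$. For a positive integer $\alpha$, $\bar{p}^{A}_{\alpha}(n)=E^{A}_{\alpha}(n)-O^{A}_{\alpha}(n)$, where $E^{A}_{\alpha}(n)$ (resp. $O^{A}_{\alpha}(n)$) is the number of partitions of $n$ into parts from $A$ in which each part occurs at most $\alpha$ times and having an even (resp. odd) number of parts, and $\bar{p}^{A}_{\alpha}(0)=1$. *)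

From mathcomp Require Import all_boot all_order all_algebra.
From mathcomp Require Import boolp.
Set Implicit Arguments. Unset Strict Implicit. Unset Printing Implicit Defensive.
Import GRing.Theory Num.Theory.
Local Open Scope ring_scope.

Definition inA (psi : nat -> nat) (k : nat) : bool :=
  `[< exists i : nat, (0 < i)%N /\ psi i = k >].

(* A partition of n is encoded by its multiplicity function m : part size k
   (0 <= k <= n) |-> number of occurrences m k (at most n, since parts >= 1). *)
Definition is_partA (psi : nat -> nat) (n : nat)
    (m : {ffun 'I_n.+1 -> 'I_n.+1}) : bool :=
  ((\sum_(k < n.+1) (k : nat) * (m k : nat))%N == n)
  && [forall k : 'I_n.+1, (m k != 0%N :> nat) ==> ((0 < k)%N && inA psi k)].

Definition num_parts (n : nat) (m : {ffun 'I_n.+1 -> 'I_n.+1}) : nat :=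
  (\sum_(k < n.+1) (m k : nat))%N.

Definition pbarA (psi : nat -> nat) (n : nat) : int :=
  \sum_(m : {ffun 'I_n.+1 -> 'I_n.+1} | is_partA psi m)
     (-1) ^+ (num_parts m).

Definition pbarA_alpha (psi : nat -> nat) (alpha n : nat) : int :=
  \sum_(m : {ffun 'I_n.+1 -> 'I_n.+1} |
          is_partA psi m && [forall k : 'I_n.+1, (m k <= alpha)%N])
     (-1) ^+ (num_parts m).

From mathcomp Require Import all_boot all_order all_algebra.
Import GRing.Theory Num.Theory.

(* Write each multiplicity m_k of a partition of n in base alpha + 1, as
   m_k = sum_j (alpha + 1)^j d_jk with 0 <= d_jk <= alpha.  The j-th digit
   layer (d_jk)_k is a partition of N_j = sum_k k d_jk into parts from A, each
   occurring at most alpha times, and n = sum_j (alpha + 1)^j N_j; conversely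
   such a family of layers recombines into a partition of n.  Since alpha + 1
   is odd, (-1)^(m_k) = prod_j (-1)^(d_jk), so the sign of a partition is the
   product of the signs of its layers. *)

Lemma sum_base_digits b L x : 1 < b -> x < b ^ L ->
  \sum_(j < L) b ^ j * (x %/ b ^ j %% b) = x.
Proof.
move=> b_gt1; have b_gt0 := ltnW b_gt1.
elim: L x => [|L IHL] x x_lt; first by move: x_lt; rewrite big_ord0 expn0; case: x.
rewrite big_ord_recl expn0 mul1n divn1.
under eq_bigr => j _ do rewrite /bump /= expnS divnMA -mulnA.
rewrite -big_distrr /= IHL; last by rewrite ltn_divLR // -expnSr.
by rewrite addnC mulnC -divn_eq.
Qed.

Lemma base_digit_sum b L (d : nat -> nat) i : (forall j, d j < b) -> i < L ->
  (\sum_(j < L) b ^ j * d j) %/ b ^ i %% b = d i.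
Proof.
elim: L d i => [|L IHL] d i d_lt // i_lt.
have b_gt0 : 0 < b by apply: leq_ltn_trans (d_lt 0).
rewrite big_ord_recl expn0 mul1n.
under eq_bigr => j _ do rewrite /bump /= expnS -mulnA.
rewrite -big_distrr /= addnC mulnC.
case: i i_lt => [|i] i_lt; first by rewrite expn0 divn1 modnMDl modn_small.
rewrite expnS divnMA divnMDl // (divn_small (d_lt 0)) addn0.
exact: (IHL (fun j => d j.+1)).
Qed.

Local Open Scope ring_scope.
Local Notation mult_fun n := {ffun 'I_n.+1 -> 'I_n.+1}.
Local Notation layer_fun n := {ffun 'I_n.+1 -> mult_fun n}.

Section Partitions.
Variables (psi : nat -> nat) (alpha : nat).

Definition weight {B} (mu : mult_fun B) : nat := (\sum_(k < B.+1) k * mu k)%N.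

Definition parts_inA {B} (mu : mult_fun B) : bool :=
  [forall k, (mu k != 0%N :> nat) ==> (0 < k)%N && inA psi k].

Definition is_partA_alpha {B} N (mu : mult_fun B) : bool :=
  (weight mu == N) && parts_inA mu && [forall k, (mu k <= alpha)%N].

Definition sgn {B} (mu : mult_fun B) : int := (-1) ^+ num_parts mu.

Lemma is_partAE {B} (mu : mult_fun B) :
  is_partA psi mu = (weight mu == B) && parts_inA mu.
Proof. by []. Qed.

Lemma leq_mul_weight {B} (mu : mult_fun B) (k : 'I_B.+1) :
  (k * mu k <= weight mu)%N.
Proof. by rewrite /weight (bigD1 k) //= leq_addr. Qed.

Lemma mult_le_weight {B} (mu : mult_fun B) (k : 'I_B.+1) :
  parts_inA mu -> (mu k <= weight mu)%N.
Proof.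
move=> /forallP /(_ k); have [->//|mu_k_gt0 /= /andP [k_gt0 _]] := posnP (mu k).
by apply: leq_trans _ (leq_mul_weight mu k); rewrite leq_pmull.
Qed.

Lemma mult_eq0_gt_weight {B} (mu : mult_fun B) (k : 'I_B.+1) :
  (weight mu < k)%N -> mu k = 0%N :> nat.
Proof.
move=> weight_lt; apply/eqP; rewrite -leqn0 leqNgt; apply/negP => mu_k_gt0.
move: (leq_mul_weight mu k); rewrite leqNgt => /negP; apply.
by apply: leq_trans weight_lt _; rewrite leq_pmulr.
Qed.

Section Widen.
Context {N B : nat}.
Hypothesis leNB : (N <= B)%N.

Definition widen_mult (mu : mult_fun N) : mult_fun B :=
  [ffun k : 'I_B.+1 => inord (if (k <= N)%N then mu (inord k) : nat else 0%N)].

Definition narrow_mult (mu : mult_fun B) : mult_fun N :=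
  [ffun k : 'I_N.+1 => inord (mu (inord k))].

Lemma widen_multE (mu : mult_fun N) k :
  widen_mult mu k = (if (k <= N)%N then mu (inord k) : nat else 0%N) :> nat.
Proof.
rewrite ffunE inordK //; case: ifP => // _.
exact: leq_trans (ltn_ord _) _.
Qed.

Lemma sum_widen_mult (mu : mult_fun N) (F : nat -> nat -> nat) :
    (forall k, F k 0%N = 0%N) ->
  (\sum_(k < B.+1) F k (widen_mult mu k) = \sum_(k < N.+1) F k (mu k))%N.
Proof.
move=> F0; under [RHS]eq_bigr => k _ do rewrite -[k in mu k]inord_val.
rewrite [RHS](big_ord_widen B.+1 (fun k => F k (mu (inord k)))) // [RHS]big_mkcond.
by apply: eq_bigr => k _; rewrite widen_multE ltnS; case: ifP.
Qed.

Lemma forall_widen_mult (mu : mult_fun N) (P : nat -> nat -> bool) :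
    (forall k, P k 0%N) ->
  [forall k : 'I_B.+1, P k (widen_mult mu k)] = [forall k : 'I_N.+1, P k (mu k)].
Proof.
move=> P0; apply/forallP/forallP => P_mu k.
  have k_lt : (k < B.+1)%N by apply: leq_trans (ltn_ord k) _.
  by move: (P_mu (inord k)); rewrite widen_multE inordK // -ltnS ltn_ord inord_val.
by rewrite (widen_multE mu k); case: ifP => // k_le; rewrite -{1}(@inordK N k).
Qed.

Lemma widen_multK : cancel widen_mult narrow_mult.
Proof.
move=> mu; apply/ffunP => k; apply: ord_inj.
have k_lt : (k < B.+1)%N by apply: leq_trans (ltn_ord k) _.
by rewrite ffunE widen_multE (inordK k_lt) -ltnS ltn_ord !inord_val.
Qed.

Lemma narrow_multK (mu : mult_fun B) :
    (forall k, mu k <= N)%N ->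
    (forall k : 'I_B.+1, N < k -> mu k = 0%N :> nat)%N ->
  widen_mult (narrow_mult mu) = mu.
Proof.
move=> mu_le mu_eq0; apply/ffunP => k; apply: ord_inj.
rewrite widen_multE; case: ifP => [k_le|/negbT]; last by rewrite -ltnNge => /mu_eq0.
by rewrite ffunE !inordK ?inord_val // ltnS.
Qed.

End Widen.

Lemma is_partA_alpha_widen N B (mu : mult_fun N) : (N <= B)%N ->
  is_partA_alpha N (@widen_mult N B mu) = is_partA_alpha N mu.
Proof.
move=> leNB; rewrite /is_partA_alpha /weight /parts_inA.
rewrite (sum_widen_mult leNB mu (fun k m => k * m)%N) => [|k]; last exact: muln0.
rewrite (forall_widen_mult leNB mu
  (fun k m => (m != 0%N) ==> (0 < k)%N && inA psi k)) //.
by rewrite (forall_widen_mult leNB mu (fun _ m => m <= alpha)%N).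
Qed.

Lemma sgn_widen N B (mu : mult_fun N) : (N <= B)%N ->
  sgn (@widen_mult N B mu) = sgn mu.
Proof.
by move=> leNB; rewrite /sgn /num_parts (sum_widen_mult leNB mu (fun _ m => m)).
Qed.

Lemma pbarA_alpha_widen {N B} : (N <= B)%N ->
  pbarA_alpha psi alpha N = \sum_(mu : mult_fun B | is_partA_alpha N mu) sgn mu.
Proof.
move=> leNB; rewrite (reindex (@widen_mult N B)) /=.
  by apply: eq_big => [mu | mu _]; rewrite ?is_partA_alpha_widen ?sgn_widen.
exists (@narrow_mult N B) => [mu _ | mu]; first exact: widen_multK.
rewrite inE => /andP [/andP [/eqP weight_mu parts_mu] _].
apply: narrow_multK => // k; rewrite -weight_mu.
  exact: mult_le_weight.
exact: mult_eq0_gt_weight.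
Qed.

End Partitions.

Section Digits.
Variables (psi : nat -> nat) (alpha n : nat).
Hypothesis alpha_gt0 : (0 < alpha)%N.
Implicit Types (m N : mult_fun n) (g : layer_fun n) (j k : 'I_n.+1).

Definition digits (m : mult_fun n) : layer_fun n :=
  [ffun j : 'I_n.+1 => [ffun k => inord (m k %/ alpha.+1 ^ j %% alpha.+1)]].

Definition undigits (g : layer_fun n) : mult_fun n :=
  [ffun k => inord (\sum_(j < n.+1) alpha.+1 ^ j * g j k)].

Definition layers (N : mult_fun n) (g : layer_fun n) : bool :=
  [forall j, is_partA_alpha psi alpha (N j) (g j)].

(* The truncation by [inord] is harmless: in [layered], [layers] forces
   [layer_sizes g j = weight (g j)]. *)
Definition layer_sizes (g : layer_fun n) : mult_fun n :=
  [ffun j => inord (weight (g j))].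

Definition layered (g : layer_fun n) : bool :=
  ((\sum_(j < n.+1) alpha.+1 ^ j * layer_sizes g j)%N == n)
  && layers (layer_sizes g) g.

Lemma digitsE m j k : digits m j k = (m k %/ alpha.+1 ^ j %% alpha.+1)%N :> nat.
Proof.
rewrite !ffunE inordK //.
exact: leq_ltn_trans (leq_trans (leq_mod _ _) (leq_div _ _)) (ltn_ord (m k)).
Qed.

Lemma digit_le_mult m j k : (digits m j k <= m k)%N.
Proof. by rewrite digitsE; apply: leq_trans (leq_mod _ _) (leq_div _ _). Qed.

Lemma sum_digits_mult m k : (\sum_(j < n.+1) alpha.+1 ^ j * digits m j k)%N = m k.
Proof.
under eq_bigr => j _ do rewrite digitsE.
apply: sum_base_digits; first by rewrite ltnS.
exact: leq_trans (ltn_ord (m k)) (ltnW (ltn_expl _ _)).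
Qed.

Lemma digitsK : cancel digits undigits.
Proof.
by move=> m; apply/ffunP => k; apply: ord_inj; rewrite ffunE sum_digits_mult inord_val.
Qed.

Lemma prod_sgn_digits m :
  ~~ odd alpha -> \prod_(j < n.+1) sgn (digits m j) = sgn m.
Proof.
move=> alpha_even; rewrite /sgn /num_parts.
under eq_bigr => j _ do rewrite expr_sum.
rewrite exchange_big /= expr_sum; apply: eq_bigr => k _.
rewrite -[in RHS](sum_digits_mult m k) expr_sum; apply: eq_bigr => j _.
by rewrite exprM -[(-1) ^+ (alpha.+1 ^ j)]signr_odd oddX /= alpha_even orbT.
Qed.

Lemma sum_weight_digits m :
  (\sum_(j < n.+1) alpha.+1 ^ j * weight (digits m j))%N = weight m.
Proof.
rewrite /weight; under eq_bigr => j _ do rewrite big_distrr /=.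
rewrite exchange_big /=; apply: eq_bigr => k _.
rewrite -[in RHS](sum_digits_mult m k) big_distrr /=; apply: eq_bigr => j _.
exact: mulnCA.
Qed.

Lemma parts_inA_digits m :
  parts_inA psi m = [forall j, parts_inA psi (digits m j)].
Proof.
apply/forallP/forallP => [parts_m j | parts_digits k].
  apply/forallP => k; apply/implyP; rewrite -lt0n => digit_gt0.
  apply: (implyP (parts_m k)); rewrite -lt0n.
  exact: leq_trans digit_gt0 (digit_le_mult m j k).
apply/implyP; rewrite -(sum_digits_mult m k) => sum_neq0.
have [j digit_neq0] : exists j, digits m j k != 0%N :> nat.
  apply/existsP; apply: contraR sum_neq0; rewrite negb_exists => /forallP digits0.
  by rewrite big1 // => j _; rewrite (eqP (negPn (digits0 j))) muln0.
exact: (implyP (forallP (parts_digits j) k)).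
Qed.

Lemma weight_digits_le m j : (weight (digits m j) <= weight m)%N.
Proof. by apply: leq_sum => k _; rewrite leq_mul2l digit_le_mult orbT. Qed.

Lemma weight_layers {N g} : layers N g -> forall j, weight (g j) = N j.
Proof. by move=> /forallP layers_g j; case/andP: (layers_g j) => /andP [/eqP]. Qed.

Lemma layer_sizes_layers {N g} : layers N g -> layer_sizes g = N.
Proof.
move=> layers_g; apply/ffunP => j; apply: ord_inj.
by rewrite ffunE (weight_layers layers_g j) inord_val.
Qed.

Lemma layers_layer_sizes N : (\sum_(j < n.+1) alpha.+1 ^ j * N j == n)%N ->
  layers N =1 (fun g => layered g && (layer_sizes g == N)).
Proof.
move=> sum_N g; apply/idP/idP => [layers_g | /andP [layered_g /eqP <-]].
  by rewrite /layered (layer_sizes_layers layers_g) sum_N layers_g eqxx.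
by case/andP: layered_g.
Qed.

Lemma layered_digits m : layered (digits m) = is_partA psi m.
Proof.
rewrite is_partAE; apply/idP/andP => [layered_m | [/eqP weight_m parts_m]].
  case/andP: layered_m => /eqP sum_sizes layers_m; split.
    apply/eqP; rewrite -sum_weight_digits -[RHS]sum_sizes; apply: eq_bigr => j _.
    by rewrite (weight_layers layers_m j).
  rewrite parts_inA_digits; apply/forallP => j.
  by case/andP: (forallP layers_m j) => /andP [].
have size_digits j : layer_sizes (digits m) j = weight (digits m j) :> nat.
  by rewrite ffunE inordK // ltnS -[X in (_ <= X)%N]weight_m weight_digits_le.
apply/andP; split.
  by under eq_bigr => j _ do rewrite size_digits; rewrite sum_weight_digits weight_m.
apply/forallP => j; rewrite /is_partA_alpha size_digits eqxx /=.
move: parts_m; rewrite parts_inA_digits => /forallP -> /=.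
by apply/forallP => k; rewrite digitsE -ltnS ltn_pmod.
Qed.

Lemma undigits_bound g k :
  layered g -> (\sum_(j < n.+1) alpha.+1 ^ j * g j k <= n)%N.
Proof.
case/andP => /eqP sum_sizes layers_g; rewrite -[X in (_ <= X)%N]sum_sizes.
apply: leq_sum => j _; apply: leq_mul => //; rewrite -(weight_layers layers_g j).
case/andP: (forallP layers_g j) => /andP [_ parts_j] _.
exact: (mult_le_weight psi (g j) k parts_j).
Qed.

Lemma undigitsK g : layered g -> digits (undigits g) = g.
Proof.
move=> layered_g; apply/ffunP => j; apply/ffunP => k; apply: ord_inj.
rewrite digitsE ffunE inordK ?ltnS ?undigits_bound //.
under eq_bigr => i _ do rewrite -[X in g X k]inord_val.
rewrite (base_digit_sum _ _ (fun i => g (inord i) k)) ?inord_val // => i.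
case/andP: layered_g => _ /forallP /(_ (inord i)) /andP [_ /forallP /(_ k)].
by rewrite ltnS.
Qed.

Lemma prod_pbarA_alpha N : \prod_(j < n.+1) pbarA_alpha psi alpha (N j) =
  \sum_(g | layers N g) \prod_(j < n.+1) sgn (g j).
Proof.
under eq_bigr => j _ do rewrite (pbarA_alpha_widen psi alpha (leq_ord (N j))).
by rewrite bigA_distr_big_dep; apply: eq_bigl => g; apply/familyP/forallP.
Qed.

End Digits.

Theorem mainTheorem5 (psi : nat -> nat)
  (psi_pos : forall i : nat, (0 < i)%N -> (0 < psi i)%N)
  (psi_inj : forall i j : nat, (0 < i)%N -> (0 < j)%N -> psi i = psi j -> i = j)
  (alpha : nat) (alpha_pos : (0 < alpha)%N) (alpha_even : ~~ odd alpha)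
  (n : nat) :
  pbarA psi n =
  \sum_(N : {ffun 'I_n.+1 -> 'I_n.+1} |
          (\sum_(i < n.+1) (alpha.+1) ^ i * (N i : nat))%N == n)
     \prod_(j < n.+1) pbarA_alpha psi alpha (N j).
Proof.
under [RHS]eq_bigr => N _ do rewrite prod_pbarA_alpha.
under [RHS]eq_bigr => N sum_N
  do rewrite (eq_bigl _ _ (layers_layer_sizes psi _ _ _ sum_N)).
rewrite -(partition_big (layer_sizes n) _) /pbarA; last by move=> g /andP [].
rewrite [RHS](reindex (digits alpha n)) /=; last first.
  exists (undigits alpha n) => [m _ | g]; first exact: digitsK.
  by rewrite inE => /undigitsK ->.
by apply: eq_big => [m | m _]; rewrite ?layered_digits ?prod_sgn_digits.
Qed.
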